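(* Let $t=(k_1,\dots,k_l)$ be a parameter tuple of length $l\in\mathbb{N}$, let $m\in\mathbb{N}_0$ and $s\in\mathbb{R}$ with $s>1$. Then $$\mathrm{grt}_{m+l}(\underbrace{2,\dots,2}_{m},k_1,\dots,k_l)\le\max\big(s\cdot m+1,\ \mathrm{cr}_{\mathrm{app}}(t,1-\tfrac1s)\big).$$
   Context: A parameter tuple is a non-decreasing tuple $(k_1,\dots,k_r)$ of integers $k_i\ge2$. An arithmetic progression of size $k$ is a $k$-element set $P\subset\mathbb{N}$ such that, in natural order, consecutive elements always have the same distance. Let $p_1<p_2<\dots$ be the prime numbers. For a parameter tuple $(k_1,\dots,k_r)$, the Green-Tao number $\mathrm{grt}_r(k_1,\dots,k_r)$ is the smallest $n_0\in\mathbb{N}$ such that for every $n\ge n_0$ and every $f:\{p_1,\dots,p_n\}\to\{1,\dots,r\}$ there is $i$ such that $f^{-1}(i)$ contains an arithmetic progression of size $k_i$. For $q>0$, $\mathrm{cr}_{\mathrm{app}}(t,q)\in\mathbb{N}\cup\{+\infty\}$ is the infimum of all $n\in\mathbb{N}$ such that for all $n'\ge n$ and all pairwise disjoint $S_1,\dots,S_l\subseteq\{p_1,\dots,p_{n'}\}$ with $S_i$ containing no arithmetic progression of size $k_i$, we have $\frac{|S_1|+\dots+|S_l|}{n'}<q$ (infimum of the empty set is $+\infty$). *)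

From HB Require Import structures.
From mathcomp Require Import all_boot all_order all_algebra.
From mathcomp Require Import boolp reals constructive_ereal.
Set Implicit Arguments. Unset Strict Implicit. Unset Printing Implicit Defensive.
Import Order.TTheory GRing.Theory Num.Theory.

Definition primepi (q : nat) : nat := \sum_(i < q.+1) prime i.

(* {p_1, ..., p_n}: the first n primes (p_i is the prime with primepi p_i = i) *)
Definition first_primes (n : nat) : pred nat :=
  [pred q | prime q && (primepi q <= n)].

Definition has_AP (S : pred nat) (k : nat) : Prop :=
  exists a d : nat, 0 < d /\ forall i, i < k -> S (a + i * d).

Definition param_tuple (ks : seq nat) : bool :=
  all (leq 2) ks && sorted leq ks.

(* infimum over N = {1,2,...} of a set of naturals; None = +infinity *)
Definition inf_pos (P : nat -> Prop) : option nat :=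
  match pselect (exists n, 0 < n /\ P n) with
  | left h => Some (@ex_minn (fun n => `[< 0 < n /\ P n >])
                     (let: ex_intro n Hn := h in ex_intro _ n (asboolT Hn)))
  | right _ => None
  end.

Definition ext_of_opt (R : realType) (o : option nat) : \bar R :=
  if o is Some n then (n%:R)%:E else +oo%E.

Definition grt_prop (ks : seq nat) (n0 : nat) : Prop :=
  forall n, n0 <= n ->
  forall f : nat -> 'I_(size ks),
  exists i : 'I_(size ks),
    has_AP [pred q | (q \in first_primes n) && (f q == i)] (nth 0 ks i).

Definition grt (R : realType) (ks : seq nat) : \bar R :=
  ext_of_opt R (inf_pos (grt_prop ks)).

Definition cr_app_prop (R : realType) (t : seq nat) (q : R) (n : nat) : Prop :=
  forall n', n <= n' ->
  forall S : 'I_(size t) -> seq nat,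
    (forall i, uniq (S i)) ->
    (forall i, {subset S i <= first_primes n'}) ->
    (forall i j, i != j -> forall x, x \in S i -> x \notin S j) ->
    (forall i, ~ has_AP (mem (S i)) (nth 0 t i)) ->
    ((\sum_(i < size t) size (S i))%:R / n'%:R < q)%R.

Definition cr_app (R : realType) (t : seq nat) (q : R) : \bar R :=
  ext_of_opt R (inf_pos (cr_app_prop t q)).

(* Colour the first n primes. Each of the m colours that must avoid 2-term
   progressions can be used at most once, so at least n - m primes receive one
   of the colours of t. These colour classes are pairwise disjoint and avoid the
   progressions prescribed by t, so once n >= cr_app(t, 1 - 1/s) they cover fewer
   than (1 - 1/s) n primes. Hence n - m < (1 - 1/s) n, i.e. n < s m, which fails
   for every n > s m. *)

From HB Require Import structures.
From mathcomp Require Import all_boot all_order all_algebra.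
From mathcomp Require Import boolp reals constructive_ereal.
Set Implicit Arguments. Unset Strict Implicit. Unset Printing Implicit Defensive.
Import Order.TTheory GRing.Theory Num.Theory.

Lemma nat_fun_reaches (g : nat -> nat) n :
  g 0 = 0 -> (forall x, g x.+1 <= (g x).+1) -> (exists x, n <= g x) ->
  exists x, g x = n.
Proof.
move=> g0 g_step ex_ge; case: (ex_minnP ex_ge) => x le_n_gx x_min.
exists x; apply/eqP; rewrite eqn_leq le_n_gx andbT.
case: x le_n_gx x_min => [|y] _ x_min; first by rewrite g0.
have lt_gy_n : g y < n by rewrite ltnNge; apply/negP => /x_min; rewrite ltnn.
exact: leq_trans (g_step y) lt_gy_n.
Qed.

Lemma primepi0 : primepi 0 = 0.
Proof. by rewrite /primepi big_ord_recr big_ord0. Qed.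

Lemma primepiS x : primepi x.+1 = primepi x + prime x.+1.
Proof. by rewrite /primepi big_ord_recr. Qed.

Lemma primepi_homo : {homo primepi : x y / x <= y}.
Proof.
move=> x y /subnKC <-; elim: (y - x) => [|k IH]; first by rewrite addn0.
by rewrite addnS primepiS (leq_trans IH) ?leq_addr.
Qed.

Lemma primepi_unbounded n : exists x, n <= primepi x.
Proof.
elim: n => [|n [x le_n_px]]; first by exists 0.
have [[|p] lt_xp pr_p] := prime_above x; first by [].
exists p.+1; rewrite primepiS pr_p addn1 ltnS.
by rewrite (leq_trans le_n_px) // primepi_homo // -ltnS.
Qed.

Lemma primepi_surj n : exists x, primepi x = n.
Proof.
apply: nat_fun_reaches primepi0 _ (primepi_unbounded n) => x.
by rewrite primepiS addnC; case: (prime _).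
Qed.

Lemma size_primes_iota x : size [seq p <- iota 0 x.+1 | prime p] = primepi x.
Proof.
elim: x => [|x IH]; first by rewrite primepi0.
rewrite -addn1 iotaD filter_cat size_cat IH primepiS /=.
by case: (prime _).
Qed.

Lemma first_primes_seq n :
  exists L, [/\ uniq L, size L = n & {subset L <= first_primes n}].
Proof.
have [x <-] := primepi_surj n.
exists [seq p <- iota 0 x.+1 | prime p]; split.
- by rewrite filter_uniq ?iota_uniq.
- exact: size_primes_iota.
- move=> q; rewrite mem_filter mem_iota add0n ltnS => /andP [pr_q /andP [_ le_qx]].
  by rewrite inE pr_q primepi_homo.
Qed.

Lemma has_AP_sub (P Q : pred nat) k :
  {subset P <= Q} -> has_AP P k -> has_AP Q k.
Proof. by move=> PQ [a [d [d_gt0 Pa]]]; exists a, d; split=> // i /Pa /PQ. Qed.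

Lemma has_AP2 (P : pred nat) a b : a != b -> P a -> P b -> has_AP P 2.
Proof.
have AP2_lt x y : x < y -> P x -> P y -> has_AP P 2.
  move=> lt_xy Px Py; exists x, (y - x); split; first by rewrite subn_gt0.
  by case=> [|[|//]] _; rewrite ?addn0 // mul1n subnKC // ltnW.
by case: (ltngtP a b) => // /AP2_lt AP2 _ Pa Pb; apply: AP2.
Qed.

Lemma size_le1_of_noAP2 (L : seq nat) : uniq L -> ~ has_AP (mem L) 2 -> size L <= 1.
Proof.
case: L => [|a [|b L]] //= /andP [a_notin_bL _] noAP; exfalso; apply: noAP.
apply: (@has_AP2 _ a b); rewrite ?inE ?eqxx ?orbT //.
by apply: contraNneq a_notin_bL => ->; rewrite inE eqxx.
Qed.

Lemma tail_density_ge (R : numFieldType) (s : R) (m a b : nat) :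
  (0 < s)%R -> a <= m -> (s * m%:R < (a + b)%:R)%R ->
  (1 - s^-1 <= b%:R / (a + b)%:R)%R.
Proof.
move=> s_gt0 le_am lt_sm_ab.
have ab_gt0 : (0 < (a + b)%:R :> R)%R :=
  le_lt_trans (mulr_ge0 (ltW s_gt0) (ler0n _ _)) lt_sm_ab.
rewrite ler_pdivlMr // mulrBl mul1r lerBlDr -lerBlDl {1}natrD addrK ler_pdivlMl //.
by rewrite (le_trans _ (ltW lt_sm_ab)) // ler_pM2l // ler_nat.
Qed.

Definition colour_class r (f : nat -> 'I_r) (L : seq nat) (j : nat) :=
  [seq q <- L | f q == j :> nat].

Lemma sum_size_colour_class r (f : nat -> 'I_r) L :
  \sum_(j < r) size (colour_class f L j) = size L.
Proof.
under eq_bigr do rewrite size_filter.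
elim: L => [|q L IH]; first by rewrite big1.
rewrite big_split /= IH -add1n; congr (_ + _).
rewrite (bigD1 (f q)) //= eqxx big1 // => j neq_j.
by apply/eqP; rewrite eqb0; apply: contra neq_j => /eqP/val_inj ->.
Qed.

Lemma inf_pos_Some (P : nat -> Prop) c : inf_pos P = Some c -> P c.
Proof.
rewrite /inf_pos; case: pselect => // ex.
by case: ex_minnP => g /asboolP [_ Pg] _ [<-].
Qed.

Lemma ext_inf_pos_le (R : realType) (P : nat -> Prop) n :
  0 < n -> P n -> (ext_of_opt R (inf_pos P) <= (n%:R)%:E)%E.
Proof.
move=> n_gt0 Pn; rewrite /inf_pos; case: pselect => [ex|[]]; last by exists n.
rewrite /= lee_fin ler_nat; case: ex_minnP => g _; apply.
exact/asboolP.
Qed.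

Lemma grt_prop_of_cr_app_prop (R : realType) (t : seq nat) (m : nat) (s : R) (c n0 : nat) :
  (0 < s)%R -> cr_app_prop t (1 - s^-1) c -> c <= n0 -> (s * m%:R < n0%:R)%R ->
  grt_prop (nseq m 2 ++ t) n0.
Proof.
move=> s_gt0 cr_c le_c_n0 lt_sm_n0 n le_n0_n f.
set ks := nseq m 2 ++ t.
have size_ks : size ks = m + size t by rewrite size_cat size_nseq.
apply: contrapT => noAP.
have [L [uniq_L size_L L_primes]] := first_primes_seq n.
pose C := colour_class f L.
pose A := \sum_(j < m) size (C j); pose B := \sum_(j < size t) size (C (m + j)).
have noAP_C j : j < size ks -> ~ has_AP (mem (C j)) (nth 0 ks j).
  move=> lt_j_ks /(has_AP_sub _) AP; apply: noAP; exists (Ordinal lt_j_ks); apply: AP => q.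
  by rewrite mem_filter inE => /andP [fq_j /L_primes ->].
have le_A_m : A <= m.
  rewrite -[X in _ <= X]card_ord -sum1_card; apply: leq_sum => j _.
  apply: size_le1_of_noAP2; first by rewrite filter_uniq.
  have lt_j_ks : j < size ks by rewrite size_ks ltn_addr.
  by have := noAP_C j lt_j_ks; rewrite nth_cat size_nseq ltn_ord nth_nseq ltn_ord.
have lt_B_density : (B%:R / n%:R < 1 - s^-1)%R.
  apply: (cr_c n (leq_trans le_c_n0 le_n0_n)) => [j|j q|i j neq_ij q|j].
  - by rewrite filter_uniq.
  - by rewrite mem_filter => /andP [_ /L_primes].
  - rewrite !mem_filter => /andP [/eqP fq_i _]; apply/negP => /andP [/eqP fq_j _].
    by move: neq_ij; rewrite -(inj_eq val_inj) -(eqn_add2l m) -fq_i -fq_j eqxx.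
  - have lt_j_ks : m + j < size ks by rewrite size_ks ltn_add2l.
    by have := noAP_C _ lt_j_ks; rewrite nth_cat size_nseq ltnNge leq_addr /= addKn.
have AB_n : A + B = n.
  have split_ks (F : nat -> nat) :
      \sum_(j < size ks) F j = \sum_(j < m) F j + \sum_(j < size t) F (m + j).
    by rewrite -(big_mkord xpredT F) size_ks big_mkord big_split_ord.
  by rewrite -size_L -(sum_size_colour_class f L) (split_ks (fun j => size (C j))).
have lt_sm_AB : (s * m%:R < (A + B)%:R)%R.
  by rewrite AB_n (lt_le_trans lt_sm_n0) // ler_nat.
by have := tail_density_ge s_gt0 le_A_m lt_sm_AB; rewrite AB_n leNgt lt_B_density.
Qed.

Theorem corollary2 (R : realType) (t : seq nat) (m : nat) (s : R) :
  param_tuple t -> (0 < size t)%N -> (1 < s)%R ->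
  (grt R (nseq m 2%N ++ t)%SEQ <=
     maxe ((s * m%:R + 1)%R%:E) (cr_app t (1 - s^-1)%R))%E.
Proof.
move=> _ _ s_gt1; have s_gt0 : (0 < s)%R := lt_trans ltr01 s_gt1.
rewrite /cr_app; case Ec: inf_pos => [c|]; last by rewrite /= maxey leey.
set k := (Num.truncn (s * m%:R)).+1.
have lt_sm_k : (s * m%:R < k%:R)%R := truncnS_gt _.
have le_k_sm1 : (k%:R <= s * m%:R + 1)%R.
  have [le_trunc_sm _] := andP (truncn_itv (mulr_ge0 (ltW s_gt0) (ler0n _ m))).
  by rewrite /k -addn1 natrD lerD2r.
have lt_sm_n0 : (s * m%:R < (maxn c k)%:R)%R.
  by rewrite (lt_le_trans lt_sm_k) // ler_nat leq_maxr.
have grt_n0 := grt_prop_of_cr_app_prop s_gt0 (inf_pos_Some Ec) (leq_maxl c k) lt_sm_n0.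
apply: le_trans (ext_inf_pos_le R (leq_trans (ltn0Sn _) (leq_maxr c k)) grt_n0) _.
by rewrite /= -EFin_max lee_fin natr_max ge_max !le_max le_k_sm1 lexx orbT.
Qed.
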